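(* Let $G$ be an oriented graph and $a,b$ positive integers. If $G$ admits a homomorphism to some consistent sub-orientation of the Kneser graph $KG_{a,b}$, then for every positive integer $c$ there exists a consistent sub-orientation $\overrightarrow{KG}_{ac,bc}$ of $KG_{ac,bc}$ such that $G$ admits a homomorphism to $\overrightarrow{KG}_{ac,bc}$.
   Context: An oriented graph is a finite directed graph with no directed cycle of length 1 or 2. A homomorphism of an oriented graph $G$ to an oriented graph $H$ is a map $f:V(G)\to V(H)$ such that $f(x)f(y)$ is an arc of $H$ whenever $xy$ is an arc of $G$. The Kneser graph $KG_{a,b}$ has the $b$-subsets of an $a$-set as vertices, two being adjacent iff they are disjoint. A consistent sub-orientation of $KG_{a,b}$ is an oriented graph whose underlying graph is a subgraph of $KG_{a,b}$ and such that for any two arcs $xy$ and $wz$, $x\cap z\neq\emptyset$ implies $y\cap w=\emptyset$. *)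

From mathcomp Require Import all_boot.
Set Implicit Arguments. Unset Strict Implicit. Unset Printing Implicit Defensive.

Definition oriented (V : finType) (E : rel V) : Prop :=
  (forall x, ~~ E x x) /\ (forall x y, E x y -> ~~ E y x).

Definition is_hom (V W : finType) (E : rel V) (Wv : {set W}) (F : rel W)
  (f : V -> W) : Prop :=
  (forall x, f x \in Wv) /\ (forall x y, E x y -> F (f x) (f y)).

(* (Wv, F) is a consistent sub-orientation of the Kneser graph KG_{a,b}:
   vertices are b-subsets of an a-set (here 'I_a), every arc joins two
   disjoint vertices of Wv, the digraph is oriented, and the consistency
   condition holds. *)
Definition consistent_suborientation (a b : nat)
  (Wv : {set {set 'I_a}}) (F : rel {set 'I_a}) : Prop :=
  (forall v, v \in Wv -> #|v| = b) /\
  (forall x y, F x y -> [/\ x \in Wv, y \in Wv & [disjoint x & y]]) /\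
  oriented F /\
  (forall x y w z, F x y -> F w z -> x :&: z != set0 -> y :&: w == set0).

(* Replace every point of the ground set 'I_a by c points: a set S becomes
   S x 'I_c, embedded in 'I_(a * c).  This blow-up multiplies cardinalities by
   c and commutes with intersections, so it keeps disjointness and
   non-disjointness, which are all that the Kneser, orientation and
   consistency conditions see; transporting the arcs along it turns a
   consistent sub-orientation of KG_{a,b} into one of KG_{ac,bc}. *)

From mathcomp Require Import all_boot.

Set Implicit Arguments.
Unset Strict Implicit.
Unset Printing Implicit Defensive.

Section ImageSuborientation.

Variables (a a' c : nat) (p : {set 'I_a} -> {set 'I_a'}).
Hypotheses (c_gt0 : 0 < c) (pI : {morph p : S T / S :&: T})
  (card_p : forall S, #|p S| = #|S| * c).

Lemma p_eq0 S : (p S == set0) = (S == set0).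
Proof. by rewrite -!cards_eq0 card_p muln_eq0 (gtn_eqF c_gt0) orbF. Qed.

Lemma p_inj : injective p.
Proof.
have subset_of_eq S T : p S = p T -> S \subset T.
  move=> eq_pST; apply/setIidPl/eqP; rewrite eqEcard subsetIl /=.
  by rewrite -(leq_pmul2r c_gt0) -!card_p pI eq_pST setIid.
by move=> S T eq_pST; apply/eqP; rewrite eqEsubset !subset_of_eq.
Qed.

Definition image_rel (F : rel {set 'I_a}) : rel {set 'I_a'} :=
  [rel x y | [exists u, exists v, [&& F u v, x == p u & y == p v]]].

Variable F : rel {set 'I_a}.

Lemma image_relP x y :
  reflect (exists u v, [/\ F u v, x = p u & y = p v]) (image_rel F x y).
Proof.
apply: (iffP existsP) => [[u /existsP[v /and3P[Fuv /eqP-> /eqP->]]] | ].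
  by exists u, v.
move=> [u [v [Fuv -> ->]]].
by exists u; apply/existsP; exists v; rewrite Fuv !eqxx.
Qed.

Lemma image_rel_map u v : image_rel F (p u) (p v) = F u v.
Proof.
apply/image_relP/idP => [[u' [v' [Fuv' /p_inj-> /p_inj->]]] // | Fuv].
by exists u, v.
Qed.

Lemma oriented_image : oriented F -> oriented (image_rel F).
Proof.
move=> [F_irr F_asym]; split=> [x | x y /image_relP[u [v [Fuv -> ->]]]].
  apply/image_relP => -[u [v [Fuv -> /p_inj eq_uv]]].
  by move: Fuv; rewrite eq_uv (negbTE (F_irr v)).
by rewrite image_rel_map F_asym.
Qed.

Lemma consistent_suborientation_image b (Wv : {set {set 'I_a}}) :
  consistent_suborientation b Wv F ->
  consistent_suborientation (b * c) (p @: Wv) (image_rel F).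
Proof.
move=> [card_Wv [F_arc [F_oriented F_consistent]]].
split; last split; last split.
- by move=> _ /imsetP[v Wv_v ->]; rewrite card_p card_Wv.
- move=> _ _ /image_relP[u [v [Fuv -> ->]]].
  have [Wv_u Wv_v disj_uv] := F_arc u v Fuv.
  by rewrite !imset_f // -setI_eq0 -pI p_eq0 setI_eq0.
- exact: oriented_image.
- move=> _ _ _ _ /image_relP[x [y [Fxy -> ->]]] /image_relP[w [z [Fwz -> ->]]].
  by rewrite -!pI !p_eq0; exact: F_consistent Fxy Fwz.
Qed.

Lemma is_hom_image (V : finType) (E : rel V) (Wv : {set {set 'I_a}}) f :
  is_hom E Wv F f -> is_hom E (p @: Wv) (image_rel F) (p \o f).
Proof.
move=> [f_Wv f_arc]; split=> [x | x y Exy] /=; first exact: imset_f (f_Wv x).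
by rewrite image_rel_map f_arc.
Qed.

End ImageSuborientation.

Section Blowup.

Variables a c : nat.

Definition blowup_index (i : 'I_a * 'I_c) : 'I_(a * c) :=
  let cardX := etrans (card_prod _ _) (congr2 muln (card_ord a) (card_ord c))
  in cast_ord cardX (enum_rank i).

Lemma blowup_index_inj : injective blowup_index.
Proof. by move=> i j /cast_ord_inj/enum_rank_inj. Qed.

Definition blowup (S : {set 'I_a}) : {set 'I_(a * c)} :=
  blowup_index @: setX S [set: 'I_c].

Lemma blowupI : {morph blowup : S T / S :&: T}.
Proof.
move=> S T; rewrite /blowup -imsetI; last by move=> i j _ _ /blowup_index_inj.
suff -> : setX (S :&: T) [set: 'I_c] =
          setX S [set: 'I_c] :&: setX T [set: 'I_c] by [].
by apply/setP => -[i k]; rewrite !inE !andbT.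
Qed.

Lemma card_blowup S : #|blowup S| = #|S| * c.
Proof.
by rewrite card_imset ?cardsX ?cardsT ?card_ord //; exact: blowup_index_inj.
Qed.

End Blowup.

Theorem theorem2 (V : finType) (E : rel V) (a b : nat) :
  oriented E -> 0 < a -> 0 < b ->
  (exists (Wv : {set {set 'I_a}}) (F : rel {set 'I_a}) (f : V -> {set 'I_a}),
      consistent_suborientation b Wv F /\ is_hom E Wv F f) ->
  forall c : nat, 0 < c ->
  exists (Wv : {set {set 'I_(a * c)}}) (F : rel {set 'I_(a * c)})
         (f : V -> {set 'I_(a * c)}),
    consistent_suborientation (b * c) Wv F /\ is_hom E Wv F f.
Proof.
move=> _ _ _ [Wv [F [f [F_cso f_hom]]]] c c_gt0.
have [blowupI_c card_blowup_c] := (@blowupI a c, @card_blowup a c).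
exists (blowup c @: Wv), (image_rel (blowup c) F), (blowup c \o f); split.
- exact: (consistent_suborientation_image c_gt0 blowupI_c card_blowup_c)
    _ _ _ F_cso.
- exact: is_hom_image c_gt0 blowupI_c card_blowup_c _ _ _ _ _ f_hom.
Qed.
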